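(* Let $\Lambda=\{\lambda_i\}_{i\geq 0}$ be a nontrivial numerical semigroup (i.e. $\Lambda\neq\mathbb{N}_0$) with $\lambda_0=0<\lambda_1<\cdots$ and conductor $c=\lambda_k$. Let $\lambda_s$ be an order-zero seed of $\Lambda$, let $\tilde\Lambda=\Lambda\setminus\{\lambda_s\}$, and set $\tilde s=s-k$ (so $0\le\tilde s<\lambda_1$ and $\lambda_s=c+\tilde s$). Let $S(\Lambda)=S_0S_1S_2\cdots$ be the seed string of $\Lambda$, and define the binary string $\tilde S=\tilde S_0\tilde S_1\cdots$ by $\tilde S_\ell=0$ if $\ell=\lambda_i+j$ for some $1\leq i<k$ and $0\leq j<\min(\tilde s,\lambda_{i+1}-\lambda_i)$, and $\tilde S_\ell=S_\ell$ otherwise. Then the seed string of $\tilde\Lambda$, which has conductor $c+\tilde s+1$, is $$S(\tilde\Lambda)=\tilde S_{\tilde s+1}\,\tilde S_{\tilde s+2}\cdots\tilde S_{c-1}\,\underbrace{0\cdots0\,1}_{2\tilde s}\,1\,1$$ (followed by zeros), where the underbraced block consists of $2\tilde s$ bits, namely $2\tilde s-1$ zeros followed by a one (and is empty when $\tilde s=0$). In particular, $S(\tilde\Lambda)=S_1\cdots S_{c-1}\,1\,1$ whenever $\tilde s=0$.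
   Context: A numerical semigroup is a subset $\Lambda\subseteq\mathbb{N}_0$ containing $0$, closed under addition, with finite complement; the elements of $\mathbb{N}_0\setminus\Lambda$ are gaps and their number $g$ is the genus. The elements are enumerated increasingly $\lambda_0=0<\lambda_1<\cdots$; $k$ is the smallest index such that $\lambda_i=i+g$ for all $i\geq k$, and the conductor is $c=\lambda_k$. A generator of a numerical semigroup is a nonzero element not expressible as a sum of two nonzero elements of the semigroup. For a numerical semigroup $\Gamma=\{\gamma_i\}_{i\ge0}$ (increasing enumeration) with conductor $c_\Gamma=\gamma_{k'}$, let $\Gamma_i=\Gamma\setminus\{\gamma_1,\dots,\gamma_i\}$; an element $\gamma_t$ with $t\geq k'$ is an order-$i$ seed of $\Gamma$ ($0\le i<k'$) if $\gamma_t+\gamma_i$ is a generator of $\Gamma_i$; order-zero seeds are the generators $\ge c_\Gamma$. The seed string $S(\Gamma)=S_0S_1S_2\cdots$ is the binary string defined, for $0\le i<k'$ and $0\le j<\gamma_{i+1}-\gamma_i$, by $S_{\gamma_i+j}=1$ if $c_\Gamma+j$ is an order-$i$ seed of $\Gamma$ and $S_{\gamma_i+j}=0$ otherwise, and $S_\ell=0$ for $\ell\ge c_\Gamma$ (so it is identified with its first $c_\Gamma$ bits). Here $\tilde\Lambda=\Lambda\setminus\{\lambda_s\}$ is again a numerical semigroup. *)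

From mathcomp Require Import all_boot.
From Stdlib Require Import ClassicalEpsilon.
Set Implicit Arguments. Unset Strict Implicit. Unset Printing Implicit Defensive.

Definition numerical_semigroup (L : pred nat) : Prop :=
  [/\ L 0, (forall x y, L x -> L y -> L (x + y)) &
      exists N, forall n, N <= n -> L n].

(* lambda_i : the i-th element in increasing order (lambda_0 = 0):
   the element x of L having exactly i elements of L below it. *)
Definition elt (L : pred nat) (i : nat) : nat :=
  epsilon (inhabits 0) (fun x => L x /\ count L (iota 0 x) = i).

Definition genus (L : pred nat) : nat :=
  epsilon (inhabits 0) (fun g => exists N, (forall n, N <= n -> L n) /\
                                   count (predC L) (iota 0 N) = g).

Definition cond_index (L : pred nat) : nat :=
  epsilon (inhabits 0) (fun k =>
    (forall i, k <= i -> elt L i = i + genus L) /\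
    (forall k', (forall i, k' <= i -> elt L i = i + genus L) -> k <= k')).

Definition conductor (L : pred nat) : nat := elt L (cond_index L).

Definition generator (L : pred nat) (x : nat) : bool :=
  [&& 0 < x, L x &
      ~~ has (fun a => [&& 0 < a, 0 < x - a, L a & L (x - a)]) (iota 0 x)].

Definition Lminus (L : pred nat) (i : nat) : pred nat :=
  [pred x | L x && all (fun j => x != elt L j) (iota 1 i)].

(* x (an element gamma_t of L with t >= k', i.e. x >= c) is an order-i seed
   of L if x + gamma_i is a generator of Gamma_i  (used for i < k'). *)
Definition is_seed (L : pred nat) (i x : nat) : bool :=
  [&& conductor L <= x, L x & generator (Lminus L i) (x + elt L i)].

(* Seed string: S_l = 1 iff l = gamma_i + j with i < k', 0 <= j < gamma_{i+1}-gamma_i,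
   and c + j an order-i seed; S_l = 0 otherwise (in particular for l >= c). *)
Definition seed_string (L : pred nat) (l : nat) : bool :=
  has (fun i => (elt L i <= l < elt L i.+1) &&
                is_seed L i (conductor L + (l - elt L i)))
      (iota 0 (cond_index L)).

Definition remove_elt (L : pred nat) (x : nat) : pred nat :=
  [pred y | L y && (y != x)].

From mathcomp Require Import all_boot zify.
From Stdlib Require Import ClassicalEpsilon.
Set Implicit Arguments. Unset Strict Implicit. Unset Printing Implicit Defensive.

(* Write the order-zero seed as x = c + t.  As x is a generator, L minus x is
   still a numerical semigroup, with conductor x + 1.  In any numerical
   semigroup, bit l of the seed string is 1 iff l < c and c + l is not a sum
   of two elements both larger than l.  For L minus x and l = t + 1 + m < c,
   the sums above m of x + 1 + m = c + l are those of L above l together with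
   a + (c + l - a) for the nonzero a in L with l - t < a <= l; the latter
   exist exactly where S~ masks S.  For larger m only elements >= c matter,
   and a sum above m avoiding x exists iff m + 2 < x, which leaves ones at
   the positions x - 2, x - 1 and x. *)

Definition rank (P : pred nat) (x : nat) : nat := count P (iota 0 x).

Section Enumeration.
Variable P : pred nat.
Hypothesis semigroupP : numerical_semigroup P.

Lemma rankS x : rank P x.+1 = rank P x + P x.
Proof. by rewrite /rank -addn1 iotaD count_cat /= add0n addn0. Qed.

Lemma leq_rank x y : x <= y -> rank P x <= rank P y.
Proof.
elim: y => [|y IH]; first by rewrite leqn0 => /eqP ->.
rewrite leq_eqVlt => /orP [/eqP -> //| lt_xy].
by rewrite rankS; apply: leq_trans (IH lt_xy) (leq_addr _ _).
Qed.

Lemma ltn_rank x y : P x -> x < y -> rank P x < rank P y.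
Proof. by move=> Px lt_xy; apply: leq_trans (leq_rank lt_xy); rewrite rankS Px addn1. Qed.

Lemma rank_inj x y : P x -> P y -> rank P x = rank P y -> x = y.
Proof.
move=> Px Py eq_r; case: (ltngtP x y) => // lt_r.
- by have := ltn_rank Px lt_r; rewrite eq_r ltnn.
- by have := ltn_rank Py lt_r; rewrite eq_r ltnn.
Qed.

Lemma rank_le x : rank P x <= x.
Proof. by rewrite /rank -{2}(size_iota 0 x) count_size. Qed.

Lemma rank_full N j : (forall n, N <= n -> P n) -> rank P (N + j) = rank P N + j.
Proof.
move=> fullN; elim: j => [|j IH]; first by rewrite !addn0.
by rewrite addnS rankS IH fullN ?leq_addr // addn1 addnS.
Qed.

Lemma rank_gt0 y : 0 < y -> 0 < rank P y.
Proof. by case: semigroupP => P0 _ _; apply: ltn_rank P0. Qed.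

Lemma elt_spec i : P (elt P i) /\ rank P (elt P i) = i.
Proof.
rewrite /elt; apply: (epsilon_spec (inhabits 0) (fun x => P x /\ rank P x = i)).
case: semigroupP => _ _ [N fullN].
have above : exists x, i < rank P x.+1.
  by exists (N + i); rewrite -addnS rank_full //; lia.
case: (ex_minnP above) => x above_i min_x.
have rank_x : rank P x <= i.
  case: x above_i min_x => [|y] // _ min_x.
  by rewrite leqNgt; apply/negP => /min_x; rewrite ltnn.
by exists x; case Px: (P x); move: above_i; rewrite rankS Px => ?; split => //; lia.
Qed.

Lemma mem_elt i : P (elt P i). Proof. exact: (elt_spec i).1. Qed.

Lemma rank_elt i : rank P (elt P i) = i. Proof. exact: (elt_spec i).2. Qed.

Lemma elt_rank y : P y -> elt P (rank P y) = y.
Proof. by move=> Py; apply: rank_inj (mem_elt _) Py (rank_elt _). Qed.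

Lemma ltn_elt i j : (elt P i < elt P j) = (i < j).
Proof.
apply/idP/idP => [lt_e | lt_ij].
  by have := ltn_rank (mem_elt i) lt_e; rewrite !rank_elt.
rewrite ltnNge; apply/negP => /leq_rank; rewrite !rank_elt; lia.
Qed.

Lemma leq_elt i j : (elt P i <= elt P j) = (i <= j).
Proof. by rewrite leqNgt ltn_elt -leqNgt. Qed.

Lemma elt0 : elt P 0 = 0.
Proof. by case: semigroupP => P0 _ _; exact: elt_rank P0. Qed.

Lemma elt_rank_bounds l : elt P (rank P l.+1).-1 <= l < elt P (rank P l.+1).-1.+1.
Proof.
have := rank_gt0 (ltn0Sn l); set i := (rank P l.+1).-1 => rank_pos.
have rankE : i.+1 = rank P l.+1 by rewrite /i prednK.
apply/andP; split; rewrite leqNgt; apply/negP.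
  by move=> /leq_rank; rewrite rank_elt; lia.
by move=> /(ltn_rank (mem_elt i.+1)); rewrite rank_elt; lia.
Qed.

Lemma exists_least_full_bound : exists cc,
  (forall n, cc <= n -> P n) /\ (forall N, (forall n, N <= n -> P n) -> cc <= N).
Proof.
case: semigroupP => _ _ [N]; elim: N => [|N IH] fullN; first by exists 0.
case PN: (P N).
  by apply: IH => n; rewrite leq_eqVlt => /orP [/eqP <- // | /fullN].
exists N.+1; split => // M fullM; rewrite leqNgt; apply/negP => ltM.
by have := fullM N (ltnSE ltM); rewrite PN.
Qed.

Section LeastFullBound.
Variable cc : nat.
Hypothesis full_cc : forall n, cc <= n -> P n.
Hypothesis least_cc : forall N, (forall n, N <= n -> P n) -> cc <= N.

Lemma genusE : genus P = cc - rank P cc.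
Proof.
rewrite /genus.
have [N [fullN <-]] := epsilon_spec (inhabits 0) (fun g => exists N,
  (forall n, N <= n -> P n) /\ count (predC P) (iota 0 N) = g)
  (ex_intro _ _ (ex_intro _ cc (conj full_cc erefl))).
rewrite -(subnKC (least_cc fullN)) iotaD count_cat.
have -> : count (predC P) (iota (0 + cc) (N - cc)) = 0.
  apply/eqP; rewrite eqn0Ngt -has_count; apply/hasPn => n.
  by rewrite mem_iota => /andP [le_cn _] /=; rewrite negbK full_cc.
by have := count_predC P (iota 0 cc); rewrite size_iota /rank; lia.
Qed.

Lemma elt_rank_full j : elt P (rank P cc + j) = cc + j.
Proof. by rewrite -rank_full // elt_rank // full_cc ?leq_addr. Qed.

Lemma cond_indexE : cond_index P = rank P cc.
Proof.
have rank_cc := rank_le cc.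
pose tail k := (forall i, k <= i -> elt P i = i + genus P) /\
  (forall k', (forall i, k' <= i -> elt P i = i + genus P) -> k <= k').
have tail_spec : tail (rank P cc).
  split => [i le_ri | k tail_k].
    by have := elt_rank_full (i - rank P cc); rewrite subnKC // genusE; lia.
  rewrite leqNgt; apply/negP => lt_k.
  have P_cc1 : P cc.-1.
    have := mem_elt (rank P cc).-1; rewrite tail_k ?genusE; last by lia.
    by have -> : (rank P cc).-1 + (cc - rank P cc) = cc.-1 by lia.
  have : cc <= cc.-1.
    by apply: least_cc => n; rewrite leq_eqVlt => /orP [/eqP <- // | ?]; apply: full_cc; lia.
  by lia.
have [tail_k least_k] := epsilon_spec (inhabits 0) tail (ex_intro _ _ tail_spec).
by apply/anti_leq/andP; split; [exact: least_k tail_spec.1 | exact: tail_spec.2 _ tail_k].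
Qed.

Lemma conductorE : conductor P = cc.
Proof. by rewrite /conductor cond_indexE -[rank P cc]addn0 elt_rank_full addn0. Qed.

End LeastFullBound.

Lemma conductor_spec : (forall n, conductor P <= n -> P n) /\
  (forall N, (forall n, N <= n -> P n) -> conductor P <= N).
Proof. by have [cc [full least]] := exists_least_full_bound; rewrite (conductorE full least). Qed.

Lemma mem_conductor_le n : conductor P <= n -> P n.
Proof. exact: conductor_spec.1. Qed.

Lemma elt_cond_indexD j : elt P (cond_index P + j) = conductor P + j.
Proof.
have [cc [full least]] := exists_least_full_bound.
by rewrite (cond_indexE full least) (conductorE full least) elt_rank_full.
Qed.

Lemma conductor_gt0 : (exists n, ~~ P n) -> 0 < conductor P.
Proof. by case=> n; apply: contraR; rewrite -eqn0Ngt => /eqP c0; rewrite mem_conductor_le ?c0. Qed.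

End Enumeration.

Definition sum_above (P : pred nat) (n l : nat) : bool :=
  has (fun a => [&& l < a, l < n - a, P a & P (n - a)]) (iota 0 n).

Lemma sum_aboveP (P : pred nat) n l :
  reflect (exists a b, [/\ a + b = n, l < a, l < b, P a & P b]) (sum_above P n l).
Proof.
apply: (iffP hasP) => [[a] | [a [b [<- la lb Pa Pb]]]].
  rewrite mem_iota => /andP [_ lt_an] /and4P [la lb Pa Pb].
  by exists a, (n - a); split => //; lia.
exists a; first by rewrite mem_iota; lia.
by rewrite addKn la lb Pa Pb.
Qed.

Section SeedString.
Variable P : pred nat.
Hypothesis semigroupP : numerical_semigroup P.

Lemma Lminus_above i l y : elt P i <= l < elt P i.+1 -> 0 < y ->
  Lminus P i y = P y && (l < y).
Proof.
move=> /andP [le_il lt_li] y_gt0; rewrite /Lminus inE; case Py: (P y) => //=.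
apply/allP/idP => [not_elt | lt_ly j].
  rewrite ltnNge; apply/negP => le_yl.
  have lt_rank : rank P y < i.+1.
    by have := ltn_rank Py (leq_ltn_trans le_yl lt_li); rewrite rank_elt.
  have rank_in : rank P y \in iota 1 i by rewrite mem_iota rank_gt0.
  by have := not_elt _ rank_in; rewrite elt_rank // eqxx.
rewrite mem_iota => /andP [_ lt_j]; apply/eqP => y_eq.
by have := leq_elt semigroupP j i; rewrite -y_eq; lia.
Qed.

Lemma is_seed_above i l : elt P i <= l < elt P i.+1 -> i < cond_index P ->
  is_seed P i (conductor P + (l - elt P i)) = ~~ sum_above P (conductor P + l) l.
Proof.
move=> l_in lt_ik; have /andP [le_il lt_li] := l_in.
have lt_lc : l < conductor P.
  by apply: leq_trans lt_li _; rewrite /conductor leq_elt.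
rewrite /is_seed leq_addr (mem_conductor_le semigroupP) ?leq_addr //= -addnA subnK //.
rewrite /generator (Lminus_above l_in) ?(mem_conductor_le semigroupP) ?leq_addr //=; last by lia.
have lt_l_cl : l < conductor P + l by lia.
rewrite lt_l_cl (leq_ltn_trans (leq0n _) lt_l_cl) /=.
congr (~~ _); apply: eq_in_has => a; rewrite mem_iota => /andP [_ lt_a].
case: (posnP a) => [-> | a_gt0]; first by rewrite ltn0.
case: (posnP (conductor P + l - a)) => [-> | b_gt0]; first by rewrite !ltn0 !andbF.
rewrite !(Lminus_above l_in) //=.
by case: (P a) (P (conductor P + l - a)) => [] []; rewrite /= ?andbF ?andbT.
Qed.

Lemma seed_stringE l :
  seed_string P l = (l < conductor P) && ~~ sum_above P (conductor P + l) l.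
Proof.
apply/hasP/andP => [[i] | [lt_lc not_sum]].
  rewrite mem_iota => /andP [_ lt_ik] /andP [l_in].
  rewrite is_seed_above //; split => //; case/andP: l_in => _ lt_li.
  by apply: leq_trans lt_li _; rewrite /conductor leq_elt.
have l_in := elt_rank_bounds semigroupP l.
have lt_ik : (rank P l.+1).-1 < cond_index P.
  by rewrite -(ltn_elt semigroupP); case/andP: l_in; rewrite -/(conductor P); lia.
by exists (rank P l.+1).-1; rewrite ?mem_iota ?l_in ?is_seed_above //=; lia.
Qed.

Lemma is_seed0_generator x : is_seed P 0 x -> conductor P <= x /\ generator P x.
Proof.
rewrite /is_seed elt0 // addn0 => /and3P [le_cx _ /and3P [x_gt0 Px indec]].
have Lminus0 y : Lminus P 0 y = P y by rewrite /Lminus inE andbT.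
split => //; apply/and3P; split; rewrite -?Lminus0 //.
by apply: contra indec; apply: sub_has => a; rewrite !Lminus0.
Qed.

End SeedString.

Definition masked_seed_string (L : pred nat) (t l : nat) : bool :=
  if has (fun i => elt L i <= l < elt L i + minn t (elt L i.+1 - elt L i))
         (iota 1 (cond_index L).-1)
  then false else seed_string L l.

Lemma masked_seed_string0 (L : pred nat) : masked_seed_string L 0 =1 seed_string L.
Proof.
move=> l; rewrite /masked_seed_string (_ : has _ _ = false) //.
by apply/hasPn => i _; rewrite min0n addn0; lia.
Qed.

Lemma window_hasP (L : pred nat) t l : numerical_semigroup L -> l < conductor L ->
  reflect (exists a, [/\ L a, 0 < a, a <= l & l - a < t])
    (has (fun i => elt L i <= l < elt L i + minn t (elt L i.+1 - elt L i))
         (iota 1 (cond_index L).-1)).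
Proof.
move=> semigroupL lt_lc; apply: (iffP hasP) => [[i] | [a [La a_gt0 le_al near]]].
  rewrite mem_iota => /andP [i_gt0 _] /andP [le_il lt_l].
  exists (elt L i); split; [exact: mem_elt | | done | lia].
  by rewrite -(elt0 semigroupL) ltn_elt.
have l_in := elt_rank_bounds semigroupL l; set i := (rank L l.+1).-1 in l_in.
have le_ai : a <= elt L i.
  rewrite -(elt_rank semigroupL La) leq_elt //.
  by have := ltn_rank La (le_al : a < l.+1); rewrite /i; lia.
have i_gt0 : 0 < i by rewrite -(ltn_elt semigroupL 0) elt0 //; lia.
have lt_ik : i < cond_index L by rewrite -(ltn_elt semigroupL) -/(conductor L); lia.
exists i; first by rewrite mem_iota; lia.
by case/andP: l_in => le_il lt_li; apply/andP; split => //; lia.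
Qed.

Section RemoveSeed.
Variables (L : pred nat) (x : nat).
Hypotheses (semigroupL : numerical_semigroup L) (le_cx : conductor L <= x).
Hypothesis generator_x : generator L x.

Local Notation c := (conductor L).
Local Notation t := (x - conductor L).
Local Notation Lx := (remove_elt L x).

Lemma seed_indecomposable a b : 0 < a -> 0 < b -> a + b = x -> L a -> L b -> False.
Proof.
move=> a_gt0 b_gt0 ab La Lb; case/and3P: generator_x => _ _ /negP; apply.
by apply/sum_aboveP; exists a, b.
Qed.

Lemma seed_sub_conductor_lt : 0 < c -> t < c.
Proof.
move=> c_gt0; rewrite ltnNge; apply/negP => le_ct.
by apply: (seed_indecomposable (a := c) (b := t)); try apply: (mem_conductor_le semigroupL); lia.
Qed.

Lemma remove_seed_semigroup : numerical_semigroup Lx.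
Proof.
case: semigroupL => L0 addL _; split.
- by rewrite /remove_elt inE L0; case/andP: generator_x; lia.
- move=> y z /andP [Ly y_ne] /andP [Lz z_ne]; rewrite /remove_elt inE addL //=.
  apply/eqP => yz; case: (posnP y) => [y0 | y_gt0]; first by move: z_ne; rewrite -yz y0 add0n eqxx.
  case: (posnP z) => [z0 | z_gt0]; first by move: y_ne; rewrite -yz z0 addn0 eqxx.
  exact: (seed_indecomposable y_gt0 z_gt0).
- by exists x.+1 => n lt_xn; rewrite /remove_elt inE (mem_conductor_le semigroupL) //=; lia.
Qed.

Lemma conductor_remove_seed : conductor Lx = x.+1.
Proof.
have [full least] := conductor_spec remove_seed_semigroup.
apply/anti_leq/andP; split.
  by apply: least => n lt_xn; rewrite /remove_elt inE (mem_conductor_le semigroupL) //=; lia.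
by rewrite ltnNge; apply/negP => /full; rewrite /remove_elt inE eqxx andbF.
Qed.

Lemma sum_above_remove_seed_low m : t + 1 + m < c ->
  reflect (sum_above L (x.+1 + m) (t + 1 + m) \/
           exists a, [/\ L a, 0 < a, a <= t + 1 + m & t + 1 + m - a < t])
    (sum_above Lx (x.+1 + m) m).
Proof.
move=> lt_lc; apply: (iffP (sum_aboveP _ _ _)).
  move=> [a [b [ab lt_ma lt_mb /andP [La a_ne] /andP [Lb b_ne]]]].
  case: (leqP a (t + 1 + m)) => le_al; first by right; exists a; split => //; lia.
  case: (leqP b (t + 1 + m)) => le_bl; first by right; exists b; split => //; lia.
  by left; apply/sum_aboveP; exists a, b.
case=> [/sum_aboveP [a [b [ab lt_la lt_lb La Lb]]] | [a [La a_gt0 le_al near]]].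
  by exists a, b; rewrite /remove_elt !inE La Lb; split => //; lia.
exists a, (x.+1 + m - a); rewrite /remove_elt !inE La (mem_conductor_le semigroupL) /=; last by lia.
by split => //; lia.
Qed.

Lemma sum_above_remove_seed_high m : c - 1 - t <= m ->
  sum_above Lx (x.+1 + m) m = (m.+2 < x).
Proof.
move=> le_m; apply/sum_aboveP/idP.
  by move=> [a [b [ab lt_ma lt_mb /andP [_ a_ne] /andP [_ b_ne]]]]; lia.
move=> lt_mx; exists (maxn c m.+2), (x.+1 + m - maxn c m.+2).
by rewrite /remove_elt !inE !(mem_conductor_le semigroupL) /=; try split; lia.
Qed.

Lemma seed_string_remove_seed_low m : m < c - 1 - t ->
  seed_string Lx m = masked_seed_string L t (t + 1 + m).
Proof.
move=> lt_m; have lt_lc : t + 1 + m < c by lia.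
rewrite /masked_seed_string (seed_stringE remove_seed_semigroup) (seed_stringE semigroupL).
rewrite conductor_remove_seed lt_lc (_ : m < x.+1) /=; last by lia.
rewrite (_ : c + (t + 1 + m) = x.+1 + m); last by lia.
case: window_hasP => // [near | far].
  by apply/negbF/sum_above_remove_seed_low; last right.
congr (~~ _); apply/sum_above_remove_seed_low/idP => //; last by left.
by case=> // /far.
Qed.

Lemma seed_string_remove_seed_high m : c - 1 - t <= m ->
  seed_string Lx m = (x <= m.+2 <= x.+2).
Proof.
move=> le_m; rewrite (seed_stringE remove_seed_semigroup).
by rewrite conductor_remove_seed sum_above_remove_seed_high //; lia.
Qed.

End RemoveSeed.

Theorem lemma4 (L : pred nat) (s : nat) :
  numerical_semigroup L ->
  (exists n, ~~ L n) ->
  is_seed L 0 (elt L s) ->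
  let c := conductor L in
  let k := cond_index L in
  let ts := s - k in
  let Lt := remove_elt L (elt L s) in
  let Sd := seed_string L in
  let St := fun l : nat =>
    if has (fun i => elt L i <= l < elt L i + minn ts (elt L i.+1 - elt L i))
           (iota 1 k.-1)
    then false else Sd l in
  [/\ conductor Lt = c + ts + 1,
      seed_string Lt =1 (fun m =>
        if m < c - 1 - ts then St (ts + 1 + m)
        else let r := m - (c - 1 - ts) in
             if r < 2 * ts then r == (2 * ts).-1
             else (r == 2 * ts) || (r == (2 * ts).+1))
    & ts = 0 ->
      seed_string Lt =1 (fun m =>
        if m < c - 1 then Sd m.+1 else (m == c - 1) || (m == c))].
Proof.
move=> semigroupL nontrivial seed; cbv zeta; set ts := s - cond_index L.
have [le_cx generator_x] := is_seed0_generator semigroupL seed.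
have ts_eq : elt L s = conductor L + ts.
  have le_ks : cond_index L <= s by rewrite -(leq_elt semigroupL).
  by rewrite -(subnKC le_ks) elt_cond_indexD.
have lt_tc : ts < conductor L.
  have := seed_sub_conductor_lt semigroupL le_cx generator_x.
  by rewrite ts_eq addKn; apply; apply: conductor_gt0.
have low := seed_string_remove_seed_low semigroupL le_cx generator_x.
have high := seed_string_remove_seed_high semigroupL le_cx generator_x.
have t_eq : elt L s - conductor L = ts by rewrite ts_eq addKn.
rewrite t_eq in low high; split.
- by rewrite conductor_remove_seed // ts_eq addn1.
- move=> m; case: ltnP => [lt_m | le_m]; first by rewrite low.
  by rewrite high //= ts_eq; case: ifP; lia.
- move=> ts0 m; rewrite ts0 subn0 in low high.
  case: ltnP => [lt_m | le_m]; first by rewrite low ?masked_seed_string0.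
  by rewrite high // ts_eq ts0; lia.
Qed.
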